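(* Assume the bound condition (B) holds with constants $A,D>0$ and that $\max\{\Delta x,\Delta y\}\le 2D/A$. Let $f$ be arbitrary (not necessarily zero) and let $\psi,\tilde\psi$ be two initial data. Let $v$ be a grid function satisfying the scheme (IFDS) with initial datum $\psi$ and $\tilde v$ a grid function satisfying the scheme (IFDS) with the same $a,b,c,d,f$ and initial datum $\tilde\psi$. Put $\varepsilon_{i,j}^k=v_{i,j}^k-\tilde v_{i,j}^k$ and $\|E^k\|_\infty=\max_{1\le i\le N_x-1,\,1\le j\le N_y-1}|\varepsilon_{i,j}^k|$. Then $$\|E^k\|_\infty\le\|E^0\|_\infty\qquad\text{for all }k=1,\dots,N_t.$$
   Context: Fix $0<\alpha<1$, $T>0$ and a rectangle $\Omega=(x_L,x_R)\times(y_L,y_R)$. Let $a,b,c,d,f$ be real functions on $\overline\Omega\times[0,T]$ and $\psi$ a real function on $\overline\Omega$. Grid: for positive integers $N_x,N_y,N_t$ put $\Delta x=(x_R-x_L)/N_x$, $\Delta y=(y_R-y_L)/N_y$, $\Delta t=T/N_t$, $x_i=x_L+i\Delta x$, $y_j=y_L+j\Delta y$, $t_k=k\Delta t$, and for a function $g$ write $g_{i,j}^k=g(x_i,y_j,t_k)$. Let $\sigma_{\alpha,\Delta t}=\frac{1}{(\Delta t)^\alpha\Gamma(2-\alpha)}$ and $\omega_s=(s+1)^{1-\alpha}-s^{1-\alpha}$ for $s\ge0$. Scheme (IFDS) with initial datum $\psi$: a grid function $(v_{i,j}^k)_{0\le i\le N_x,\,0\le j\le N_y,\,0\le k\le N_t}$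 with $v_{i,j}^0=\psi(x_i,y_j)$, $v_{i,j}^k=0$ whenever $i\in\{0,N_x\}$ or $j\in\{0,N_y\}$ (for $k\ge1$), and for all $1\le i\le N_x-1$, $1\le j\le N_y-1$, $0\le k\le N_t-1$: $$\sigma_{\alpha,\Delta t}\sum_{s=0}^{k}\omega_s\big(v_{i,j}^{k-s+1}-v_{i,j}^{k-s}\big)+a_{i,j}^{k+1}\frac{v_{i+1,j}^{k+1}-v_{i-1,j}^{k+1}}{2\Delta x}+b_{i,j}^{k+1}\frac{v_{i,j+1}^{k+1}-v_{i,j-1}^{k+1}}{2\Delta y}$$ $$=c_{i,j}^{k+1}\frac{v_{i+1,j}^{k+1}-2v_{i,j}^{k+1}+v_{i-1,j}^{k+1}}{(\Delta x)^2}+d_{i,j}^{k+1}\frac{v_{i,j+1}^{k+1}-2v_{i,j}^{k+1}+v_{i,j-1}^{k+1}}{(\Delta y)^2}+f_{i,j}^{k+1}.$$ Bound condition (B): there are constants $A>0$, $D>0$ such that for all $(x,y,t)\in\overline\Omega\times[0,T]$: $0\le a(x,y,t)\le A$, $0\le b(x,y,t)\le A$, $c(x,y,t)\ge D$, $d(x,y,t)\ge D$. *)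

From Stdlib Require Import Reals Lra Lia List Arith Factorial.
Open Scope R_scope.

(* Gamma function, characterized (for s > 0) by Gauss's product limit
   Gamma(s) = lim_{n->oo} n! n^s / (s (s+1) ... (s+n)). *)
Definition gauss_seq (s : R) (n : nat) : R :=
  INR (fact n) * Rpower (INR n) s / prod_f_R0 (fun m => s + INR m) n.

Definition is_Gamma (s G : R) : Prop := Un_cv (gauss_seq s) G.

Definition natpow (s : nat) (e : R) : R :=
  match s with O => 0 | _ => Rpower (INR s) e end.

Definition omega (alpha : R) (s : nat) : R :=
  natpow (S s) (1 - alpha) - natpow s (1 - alpha).

(* sigma_{alpha,dt} = 1 / (dt^alpha * Gamma(2-alpha)), Gamma(2-alpha) = G *)
Definition sigma (alpha dt G : R) : R := / (Rpower dt alpha * G).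

Definition IFDS (alpha G xL xR yL yR T : R) (Nx Ny Nt : nat)
    (a b c d f : R -> R -> R -> R) (psi : R -> R -> R)
    (v : nat -> nat -> nat -> R) : Prop :=
  let dx := (xR - xL) / INR Nx in
  let dy := (yR - yL) / INR Ny in
  let dt := T / INR Nt in
  let x i := xL + INR i * dx in
  let y j := yL + INR j * dy in
  let t k := INR k * dt in
  (forall i j, (i <= Nx)%nat -> (j <= Ny)%nat -> v i j 0%nat = psi (x i) (y j)) /\
  (forall i j k, (i <= Nx)%nat -> (j <= Ny)%nat -> (1 <= k <= Nt)%nat ->
     (i = 0%nat \/ i = Nx \/ j = 0%nat \/ j = Ny) -> v i j k = 0) /\
  (forall i j k, (1 <= i <= Nx - 1)%nat -> (1 <= j <= Ny - 1)%nat -> (k <= Nt - 1)%nat ->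
     sigma alpha dt G *
       sum_f_R0 (fun s => omega alpha s * (v i j (k - s + 1)%nat - v i j (k - s)%nat)) k
     + a (x i) (y j) (t (S k)) * (v (S i) j (S k) - v (i - 1)%nat j (S k)) / (2 * dx)
     + b (x i) (y j) (t (S k)) * (v i (S j) (S k) - v i (j - 1)%nat (S k)) / (2 * dy)
     = c (x i) (y j) (t (S k)) * (v (S i) j (S k) - 2 * v i j (S k) + v (i - 1)%nat j (S k)) / (dx * dx)
     + d (x i) (y j) (t (S k)) * (v i (S j) (S k) - 2 * v i j (S k) + v i (j - 1)%nat (S k)) / (dy * dy)
     + f (x i) (y j) (t (S k))).

(* max over interior nodes 1<=i<=Nx-1, 1<=j<=Ny-1 of |e i j| (0 if no interior node) *)
Definition interior_max (Nx Ny : nat) (e : nat -> nat -> R) : R :=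
  fold_right Rmax 0
    (flat_map (fun i => map (fun j => Rabs (e i j)) (seq 1 (Ny - 1)))
              (seq 1 (Nx - 1))).

From Pilot Require Import Defs.
From Stdlib Require Import Reals Lra Lia List Factorial.
Open Scope R_scope.

(* The error [v - vt] solves the scheme with [f = 0], so it suffices to show that the homogeneous
   scheme does not increase the interior maximum norm. The L1 weights [omega s] are nonnegative and
   decreasing by concavity of [t ^ (1 - alpha)], and [sigma > 0] because Gauss's sequence for
   [Gamma (2 - alpha)] is increasing and positive. If all earlier levels are bounded by [M], Abel
   summation places the discrete Caputo sum at level [k + 1] between [e - M] and [e + M], where [e]
   is the new value at a node. At an interior node where [|e|] is maximal, the mesh condition makes
   every stencil weight nonnegative, so the spatial part has the sign of [-e]; this forces
   [|e| <= M]. *)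

Lemma Rpower_1_l s : Rpower 1 s = 1.
Proof. unfold Rpower. rewrite ln_1, Rmult_0_r. apply exp_0. Qed.

Lemma Rpower_pos x s : 0 < Rpower x s.
Proof. apply exp_pos. Qed.

Lemma ln_ge_1_sub_inv x : 0 < x -> 1 - / x <= ln x.
Proof.
  intros Hx. assert (H := exp_ineq1_le (ln (/ x))).
  rewrite exp_ln, ln_Rinv in H by (try apply Rinv_0_lt_compat; lra). lra.
Qed.

Lemma Rpower_bernoulli x r : -1 < x -> 1 <= r -> 1 + r * x <= Rpower (1 + x) r.
Proof.
  intros Hx Hr.
  replace r with (1 + (r - 1)) at 2 by ring.
  rewrite Rpower_plus, Rpower_1 by lra.
  assert (Hln : x / (1 + x) <= ln (1 + x)).
  { assert (H := ln_ge_1_sub_inv (1 + x) ltac:(lra)).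
    replace (x / (1 + x)) with (1 - / (1 + x)) by (field; lra). exact H. }
  assert (Hexp : 1 + (r - 1) * (x / (1 + x)) <= Rpower (1 + x) (r - 1)).
  { eapply Rle_trans; [| apply exp_ineq1_le].
    apply Rplus_le_compat_l, Rmult_le_compat_l; lra. }
  replace (1 + r * x) with ((1 + x) * (1 + (r - 1) * (x / (1 + x)))) by (field; lra).
  apply Rmult_le_compat_l; lra.
Qed.

(* Bernoulli's inequality with exponent [/ b], applied to [x ^ b]. *)
Lemma Rpower_le_tangent x b : 0 < x -> 0 < b <= 1 -> Rpower x b <= 1 + b * (x - 1).
Proof.
  intros Hx Hb.
  set (y := Rpower x b).
  assert (Hy : 0 < y) by apply Rpower_pos.
  assert (Hyx : Rpower y (/ b) = x).
  { unfold y. rewrite Rpower_mult, Rinv_r, Rpower_1 by lra. reflexivity. }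
  assert (Hinv : 1 <= / b) by (rewrite <- Rinv_1; apply Rinv_le_contravar; lra).
  assert (H := Rpower_bernoulli (y - 1) (/ b) ltac:(lra) Hinv).
  replace (1 + (y - 1)) with y in H by ring. rewrite Hyx in H.
  apply (Rmult_le_compat_l b) in H; [| lra].
  replace (b * (1 + / b * (y - 1))) with (b + (y - 1)) in H by (field; lra).
  nra.
Qed.

Lemma Rpower_midpoint_concave m h b : 0 < h < m -> 0 < b <= 1 ->
  Rpower (m + h) b + Rpower (m - h) b <= 2 * Rpower m b.
Proof.
  intros Hh Hb.
  assert (Hscale : forall y, 0 < y -> Rpower (m * y) b <= Rpower m b * (1 + b * (y - 1))).
  { intros y Hy. rewrite <- Rpower_mult_distr by lra.
    apply Rmult_le_compat_l; [left; apply Rpower_pos | apply Rpower_le_tangent; lra]. }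
  assert (Hp : 0 < 1 + h / m) by (assert (0 < h / m) by (apply Rdiv_lt_0_compat; lra); lra).
  assert (Hm : 0 < 1 - h / m)
    by (replace (1 - h / m) with ((m - h) / m) by (field; lra); apply Rdiv_lt_0_compat; lra).
  assert (Hplus := Hscale _ Hp). assert (Hminus := Hscale _ Hm).
  replace (m * (1 + h / m)) with (m + h) in Hplus by (field; lra).
  replace (m * (1 - h / m)) with (m - h) in Hminus by (field; lra).
  lra.
Qed.

Lemma omega_0 alpha : omega alpha 0 = 1.
Proof. unfold omega, natpow. simpl. rewrite Rpower_1_l. ring. Qed.

Lemma omega_ge0 alpha s : 0 < alpha < 1 -> 0 <= omega alpha s.
Proof.
  intros Ha. unfold omega. destruct s as [|s]; cbn [natpow]; change (INR 1) with 1.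
  - rewrite Rpower_1_l. lra.
  - assert (Rpower (INR (S s)) (1 - alpha) <= Rpower (INR (S (S s))) (1 - alpha)).
    { apply Rle_Rpower_l; [lra |]. split; [apply lt_0_INR; lia | apply le_INR; lia]. }
    lra.
Qed.

Lemma omega_decreasing alpha s : 0 < alpha < 1 -> omega alpha (S s) <= omega alpha s.
Proof.
  intros Ha. unfold omega. destruct s as [|s]; cbn [natpow]; change (INR 1) with 1.
  - assert (H := Rpower_le_tangent 2 (1 - alpha) ltac:(lra) ltac:(lra)).
    replace (INR 2) with 2 by (simpl; lra). rewrite Rpower_1_l. lra.
  - set (m := INR (S (S s))).
    assert (Hm : 1 < m) by (apply (lt_INR 1); lia).
    replace (INR (S (S (S s)))) with (m + 1) by (unfold m; rewrite (S_INR (S (S s))); ring).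
    replace (INR (S s)) with (m - 1) by (unfold m; rewrite (S_INR (S s)); ring).
    assert (H := Rpower_midpoint_concave m 1 (1 - alpha) ltac:(lra) ltac:(lra)).
    lra.
Qed.

Lemma prod_shift_pos s n : 0 < s -> 0 < prod_f_R0 (fun m => s + INR m) n.
Proof.
  intros Hs. induction n as [|n IH]; cbn [prod_f_R0].
  - simpl INR. lra.
  - apply Rmult_lt_0_compat; [exact IH |]. assert (0 <= INR (S n)) by apply pos_INR. lra.
Qed.

Lemma gauss_seq_pos s n : 0 < s -> 0 < gauss_seq s n.
Proof.
  intros Hs. apply Rdiv_lt_0_compat; [| apply prod_shift_pos, Hs].
  apply Rmult_lt_0_compat; [apply lt_0_INR, lt_O_fact | apply Rpower_pos].
Qed.

Lemma gauss_seq_S s n : 0 < s -> (1 <= n)%nat ->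
  gauss_seq s (S n)
  = gauss_seq s n * ((INR n + 1) * Rpower (1 + / INR n) s / (s + (INR n + 1))).
Proof.
  intros Hs Hn. unfold gauss_seq.
  assert (HnR : 1 <= INR n) by (apply (le_INR 1); lia).
  assert (Hprod := prod_shift_pos s n Hs).
  cbn [prod_f_R0]. rewrite fact_simpl, mult_INR, S_INR.
  replace (INR n + 1) with (INR n * (1 + / INR n)) at 2 by (field; lra).
  rewrite <- Rpower_mult_distr by (try apply Rplus_lt_0_compat; try apply Rinv_0_lt_compat; lra).
  field. lra.
Qed.

(* The ratio of consecutive terms is at least [1] by Bernoulli: [(1 + 1/n)^s >= 1 + s/n]. *)
Lemma gauss_seq_le_S s n : 1 <= s -> (1 <= n)%nat -> gauss_seq s n <= gauss_seq s (S n).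
Proof.
  intros Hs Hn.
  assert (HnR : 1 <= INR n) by (apply (le_INR 1); lia).
  rewrite gauss_seq_S by (lra || lia).
  assert (Hratio : 1 <= (INR n + 1) * Rpower (1 + / INR n) s / (s + (INR n + 1))).
  { assert (Hb := Rpower_bernoulli (/ INR n) s
                   ltac:(assert (0 < / INR n) by (apply Rinv_0_lt_compat; lra); lra) Hs).
    apply (Rmult_le_compat_l (INR n + 1)) in Hb; [| lra].
    replace ((INR n + 1) * (1 + s * / INR n)) with (s + (INR n + 1) + s / INR n) in Hb
      by (field; lra).
    assert (0 < s / INR n) by (apply Rdiv_lt_0_compat; lra).
    apply (Rmult_le_reg_r (s + (INR n + 1))); [lra |].
    unfold Rdiv. rewrite Rmult_assoc, Rinv_l, Rmult_1_r by lra. lra. }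
  assert (Hpos := gauss_seq_pos s n ltac:(lra)).
  rewrite <- (Rmult_1_r (gauss_seq s n)) at 1.
  apply Rmult_le_compat_l; lra.
Qed.

Lemma is_Gamma_pos s G : 1 <= s -> is_Gamma s G -> 0 < G.
Proof.
  intros Hs HG.
  assert (Hgrow : Un_growing (fun n => gauss_seq s (n + 1))).
  { intros n. apply gauss_seq_le_S; [lra | lia]. }
  assert (H1 := growing_ineq _ G Hgrow (CV_shift' _ 1 G HG) 0).
  assert (0 < gauss_seq s 1) by (apply gauss_seq_pos; lra).
  simpl in H1. lra.
Qed.

Lemma sigma_pos alpha dt G : 0 < dt -> 0 < G -> 0 < Defs.sigma alpha dt G.
Proof.
  intros Hdt HG. apply Rinv_0_lt_compat, Rmult_lt_0_compat; [apply Rpower_pos | exact HG].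
Qed.

Lemma Rabs_le_inv x M : Rabs x <= M -> - M <= x <= M.
Proof. unfold Rabs. destruct Rcase_abs; lra. Qed.

(* Abel summation: the sum is [w 0 * u (S n)] minus a combination of [u 0 .. u n] with
   nonnegative weights [w (s - 1) - w s] and [w n], which add up to [w 0]. *)
Lemma L1_sum_bounds n (w u : nat -> R) M :
  (forall s, 0 <= w s) -> (forall s, w (S s) <= w s) ->
  (forall l, (l <= n)%nat -> Rabs (u l) <= M) ->
  w 0%nat * (u (S n) - M)
    <= sum_f_R0 (fun s => w s * (u (n - s + 1)%nat - u (n - s)%nat)) n
    <= w 0%nat * (u (S n) + M).
Proof.
  revert w. induction n as [|n IH]; intros w Hw Hdec Hu.
  - simpl. assert (H := Rabs_le_inv _ _ (Hu 0%nat (le_n _))).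
    split; apply Rmult_le_compat_l; auto; lra.
  - rewrite decomp_sum by lia. cbn [pred].
    replace (S n - 0 + 1)%nat with (S (S n)) by lia.
    replace (S n - 0)%nat with (S n) by lia.
    assert (Htail := IH (fun s => w (S s)) (fun s => Hw (S s)) (fun s => Hdec (S s))
                       (fun l Hl => Hu l ltac:(lia))).
    cbn beta in Htail.
    change (sum_f_R0 (fun i => w (S i) * (u (S n - S i + 1)%nat - u (S n - S i)%nat)) n)
      with (sum_f_R0 (fun s => w (S s) * (u (n - s + 1)%nat - u (n - s)%nat)) n).
    assert (Hn := Rabs_le_inv _ _ (Hu (S n) (le_n _))).
    assert (H01 := Hdec 0%nat). assert (H1 := Hw 1%nat).
    assert (0 <= (w 0%nat - w 1%nat) * (M - u (S n))) by (apply Rmult_le_pos; lra).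
    assert (0 <= (w 0%nat - w 1%nat) * (M + u (S n))) by (apply Rmult_le_pos; lra).
    nra.
Qed.

Lemma fold_Rmax_ge0 l : 0 <= fold_right Rmax 0 l.
Proof. induction l as [|x l IH]; simpl; [lra | eapply Rle_trans; [exact IH | apply Rmax_r]]. Qed.

Lemma fold_Rmax_ub l x : In x l -> x <= fold_right Rmax 0 l.
Proof.
  induction l as [|y l IH]; simpl; [tauto |]. intros [<- | Hx]; [apply Rmax_l |].
  eapply Rle_trans; [apply IH, Hx | apply Rmax_r].
Qed.

Lemma fold_Rmax_lub l M : 0 <= M -> (forall x, In x l -> x <= M) -> fold_right Rmax 0 l <= M.
Proof. induction l; simpl; intros HM H; [exact HM | apply Rmax_lub; auto]. Qed.

Lemma fold_Rmax_attained l : fold_right Rmax 0 l = 0 \/ In (fold_right Rmax 0 l) l.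
Proof.
  induction l as [|x l IH]; simpl; [now left |].
  destruct (Rle_dec x (fold_right Rmax 0 l)) as [Hle | Hgt].
  - rewrite Rmax_right by exact Hle. destruct IH as [-> | Hin]; [now left | now right; right].
  - rewrite Rmax_left by lra. now right; left.
Qed.

Lemma In_interior_abs Nx Ny (e : nat -> nat -> R) x :
  In x (flat_map (fun i => map (fun j => Rabs (e i j)) (seq 1 (Ny - 1))) (seq 1 (Nx - 1)))
  <-> exists i j, (1 <= i <= Nx - 1)%nat /\ (1 <= j <= Ny - 1)%nat /\ x = Rabs (e i j).
Proof.
  rewrite in_flat_map. split.
  - intros [i [Hi Hx]]. apply in_map_iff in Hx as [j [<- Hj]].
    apply in_seq in Hi. apply in_seq in Hj. exists i, j. repeat split; lia.
  - intros [i [j [Hi [Hj ->]]]]. exists i. split; [apply in_seq; lia |].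
    apply in_map_iff. exists j. split; [reflexivity | apply in_seq; lia].
Qed.

Lemma interior_max_ge0 Nx Ny e : 0 <= interior_max Nx Ny e.
Proof. apply fold_Rmax_ge0. Qed.

Lemma Rabs_le_interior_max Nx Ny e i j :
  (1 <= i <= Nx - 1)%nat -> (1 <= j <= Ny - 1)%nat -> Rabs (e i j) <= interior_max Nx Ny e.
Proof. intros Hi Hj. apply fold_Rmax_ub, In_interior_abs. eauto 6. Qed.

Lemma interior_max_le Nx Ny e M : 0 <= M ->
  (forall i j, (1 <= i <= Nx - 1)%nat -> (1 <= j <= Ny - 1)%nat -> Rabs (e i j) <= M) ->
  interior_max Nx Ny e <= M.
Proof.
  intros HM H. apply fold_Rmax_lub; [exact HM |].
  intros x [i [j [Hi [Hj ->]]]]%In_interior_abs. auto.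
Qed.

Lemma interior_max_attained Nx Ny e : interior_max Nx Ny e = 0 \/
  exists i j, (1 <= i <= Nx - 1)%nat /\ (1 <= j <= Ny - 1)%nat /\
              interior_max Nx Ny e = Rabs (e i j).
Proof.
  unfold interior_max.
  destruct (fold_Rmax_attained
              (flat_map (fun i => map (fun j => Rabs (e i j)) (seq 1 (Ny - 1))) (seq 1 (Nx - 1))))
    as [H | H]; [now left | right].
  now apply In_interior_abs in H.
Qed.

(* At a node where [|u|] is maximal, every neighbour difference has the sign opposite to [u]. *)
Lemma stencil_max_principle sg S u uE uW uN uS pE pW pN pS N M :
  0 < sg -> 0 <= pE -> 0 <= pW -> 0 <= pN -> 0 <= pS ->
  Rabs uE <= N -> Rabs uW <= N -> Rabs uN <= N -> Rabs uS <= N -> Rabs u = N ->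
  u - M <= S <= u + M ->
  sg * S = pE * (uE - u) + pW * (uW - u) + pN * (uN - u) + pS * (uS - u) ->
  N <= M.
Proof.
  intros Hsg HpE HpW HpN HpS HE HW HN HS Hu HSM Heq.
  apply Rabs_le_inv in HE, HW, HN, HS.
  unfold Rabs in Hu. destruct Rcase_abs in Hu.
  - assert (0 <= sg * S) by (rewrite Heq; nra). nra.
  - assert (sg * S <= 0) by (rewrite Heq; nra). nra.
Qed.

Lemma central_coefs_nonneg h a c : 0 < h -> 0 <= a -> a * h <= 2 * c ->
  0 <= c / (h * h) - a / (2 * h) /\ 0 <= c / (h * h) + a / (2 * h).
Proof.
  intros Hh Ha Hac.
  replace (c / (h * h) - a / (2 * h)) with ((2 * c - a * h) / (2 * h * h)) by (field; lra).
  replace (c / (h * h) + a / (2 * h)) with ((2 * c + a * h) / (2 * h * h)) by (field; lra).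
  assert (0 < 2 * h * h) by nra.
  split; apply Rmult_le_pos; try (left; apply Rinv_0_lt_compat); nra.
Qed.

Lemma convection_diffusion_max_principle sg S u uE uW uN uS a b c d dx dy N M :
  0 < sg -> 0 < dx -> 0 < dy ->
  0 <= a -> a * dx <= 2 * c -> 0 <= b -> b * dy <= 2 * d ->
  Rabs uE <= N -> Rabs uW <= N -> Rabs uN <= N -> Rabs uS <= N -> Rabs u = N ->
  u - M <= S <= u + M ->
  sg * S + a * (uE - uW) / (2 * dx) + b * (uN - uS) / (2 * dy)
  = c * (uE - 2 * u + uW) / (dx * dx) + d * (uN - 2 * u + uS) / (dy * dy) ->
  N <= M.
Proof.
  intros Hsg Hdx Hdy Ha Hac Hb Hbd HE HW HN HS Hu HSM Heq.
  destruct (central_coefs_nonneg dx a c Hdx Ha Hac) as [HpE HpW].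
  destruct (central_coefs_nonneg dy b d Hdy Hb Hbd) as [HpN HpS].
  apply (stencil_max_principle sg S u uE uW uN uS
           (c / (dx * dx) - a / (2 * dx)) (c / (dx * dx) + a / (2 * dx))
           (d / (dy * dy) - b / (2 * dy)) (d / (dy * dy) + b / (2 * dy)) N M); auto.
  apply (Rplus_eq_reg_r (a * (uE - uW) / (2 * dx) + b * (uN - uS) / (2 * dy))).
  rewrite <- Rplus_assoc, Heq. field. lra.
Qed.

Lemma IFDS_sub alpha G xL xR yL yR T Nx Ny Nt a b c d f psi psit v vt :
  IFDS alpha G xL xR yL yR T Nx Ny Nt a b c d f psi v ->
  IFDS alpha G xL xR yL yR T Nx Ny Nt a b c d f psit vt ->
  IFDS alpha G xL xR yL yR T Nx Ny Nt a b c d (fun _ _ _ => 0)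
    (fun x y => psi x y - psit x y) (fun i j k => v i j k - vt i j k).
Proof.
  intros [Hv0 [Hvb Hvs]] [Hvt0 [Hvtb Hvts]]. split; [| split].
  - intros i j Hi Hj. now rewrite Hv0, Hvt0.
  - intros i j k Hi Hj Hk Hb. rewrite Hvb, Hvtb by assumption. ring.
  - intros i j k Hi Hj Hk.
    specialize (Hvs i j k Hi Hj Hk). specialize (Hvts i j k Hi Hj Hk).
    set (Sv := sum_f_R0 _ k) in Hvs. set (Svt := sum_f_R0 _ k) in Hvts.
    match goal with |- context [sum_f_R0 ?F k] => replace (sum_f_R0 F k) with (Sv - Svt) end.
    + unfold Rdiv in *. lra.
    + unfold Sv, Svt. rewrite <- minus_sum. apply sum_eq. intros s _. ring.
Qed.

Lemma grid_coord_bounds L i N : 0 <= L -> (0 < N)%nat -> (i <= N)%nat ->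
  0 <= INR i * (L / INR N) <= L.
Proof.
  intros HL HN Hi.
  assert (HNR : 0 < INR N) by (apply lt_0_INR; lia).
  assert (Hh : 0 <= L / INR N) by (apply Rmult_le_pos; [lra | left; apply Rinv_0_lt_compat; lra]).
  split; [apply Rmult_le_pos; [apply pos_INR | exact Hh] |].
  replace L with (INR N * (L / INR N)) at 2 by (field; lra).
  apply Rmult_le_compat_r; [exact Hh | apply le_INR, Hi].
Qed.

Section HomogeneousStability.

Variables (alpha G xL xR yL yR T : R) (Nx Ny Nt : nat) (a b c d : R -> R -> R -> R)
  (psi : R -> R -> R) (v : nat -> nat -> nat -> R).

Let dx := (xR - xL) / INR Nx.
Let dy := (yR - yL) / INR Ny.
Let dt := T / INR Nt.

Hypotheses (Halpha : 0 < alpha < 1) (HT : 0 < T) (Hx : xL < xR) (Hy : yL < yR)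
  (HNx : (0 < Nx)%nat) (HNy : (0 < Ny)%nat) (HNt : (0 < Nt)%nat) (HG : 0 < G).

(* Cell Peclet number at most [2]: the central-difference stencil weights are nonnegative. *)
Hypothesis Hcoef : forall x y t, xL <= x <= xR -> yL <= y <= yR -> 0 <= t <= T ->
  0 <= a x y t /\ a x y t * dx <= 2 * c x y t /\ 0 <= b x y t /\ b x y t * dy <= 2 * d x y t.

Hypothesis Hv : IFDS alpha G xL xR yL yR T Nx Ny Nt a b c d (fun _ _ _ => 0) psi v.

Lemma Rabs_node_le_interior_max i j k : (i <= Nx)%nat -> (j <= Ny)%nat -> (1 <= k <= Nt)%nat ->
  Rabs (v i j k) <= interior_max Nx Ny (fun i j => v i j k).
Proof.
  intros Hi Hj Hk. destruct Hv as [_ [Hbd _]].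
  destruct (Nat.eq_dec i 0); destruct (Nat.eq_dec i Nx);
  destruct (Nat.eq_dec j 0); destruct (Nat.eq_dec j Ny);
  try (apply (Rabs_le_interior_max Nx Ny (fun i j => v i j k)); lia);
  rewrite Hbd, Rabs_R0 by (assumption || tauto); apply interior_max_ge0.
Qed.

Lemma interior_max_succ_le k M : (S k <= Nt)%nat -> 0 <= M ->
  (forall l i j, (l <= k)%nat -> (1 <= i <= Nx - 1)%nat -> (1 <= j <= Ny - 1)%nat ->
     Rabs (v i j l) <= M) ->
  interior_max Nx Ny (fun i j => v i j (S k)) <= M.
Proof.
  intros Hk HM Hpast.
  set (N := interior_max Nx Ny (fun i j => v i j (S k))).
  destruct (interior_max_attained Nx Ny (fun i j => v i j (S k)))
    as [HN0 | [i [j [Hi [Hj HNij]]]]]; [unfold N; lra | fold N in HNij].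
  assert (Hnode : forall i' j', (i' <= Nx)%nat -> (j' <= Ny)%nat -> Rabs (v i' j' (S k)) <= N)
    by (intros; apply Rabs_node_le_interior_max; lia).
  assert (Hdx : 0 < dx) by (apply Rdiv_lt_0_compat; [lra | apply lt_0_INR; lia]).
  assert (Hdy : 0 < dy) by (apply Rdiv_lt_0_compat; [lra | apply lt_0_INR; lia]).
  assert (Hdt : 0 < dt) by (apply Rdiv_lt_0_compat; [lra | apply lt_0_INR; lia]).
  assert (Hxi := grid_coord_bounds (xR - xL) i Nx ltac:(lra) HNx ltac:(lia)).
  assert (Hyj := grid_coord_bounds (yR - yL) j Ny ltac:(lra) HNy ltac:(lia)).
  assert (Htk := grid_coord_bounds T (S k) Nt ltac:(lra) HNt Hk).
  destruct (Hcoef (xL + INR i * dx) (yL + INR j * dy) (INR (S k) * dt))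
    as [Ha [Hac [Hb Hbd]]]; try (unfold dx, dy, dt; lra).
  assert (Hsum := L1_sum_bounds k (omega alpha) (fun l => v i j l) M
                    (fun s => omega_ge0 alpha s Halpha) (fun s => omega_decreasing alpha s Halpha)
                    (fun l Hl => Hpast l i j Hl Hi Hj)).
  rewrite omega_0, !Rmult_1_l in Hsum.
  destruct Hv as [_ [_ Hscheme]].
  specialize (Hscheme i j k Hi Hj ltac:(lia)). rewrite Rplus_0_r in Hscheme.
  refine (convection_diffusion_max_principle _ _ _ _ _ _ _ _ _ _ _ dx dy N M
            (sigma_pos alpha dt G Hdt HG) Hdx Hdy Ha Hac Hb Hbd _ _ _ _ _ Hsum Hscheme);
    [apply Hnode; lia .. | now rewrite HNij].
Qed.

Lemma IFDS_homogeneous_stable k : (k <= Nt)%nat ->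
  interior_max Nx Ny (fun i j => v i j k) <= interior_max Nx Ny (fun i j => v i j 0%nat).
Proof.
  set (M0 := interior_max Nx Ny (fun i j => v i j 0%nat)).
  assert (HM0 : 0 <= M0) by apply interior_max_ge0.
  assert (Hall : forall n, (n <= Nt)%nat -> forall l i j, (l <= n)%nat ->
            (1 <= i <= Nx - 1)%nat -> (1 <= j <= Ny - 1)%nat -> Rabs (v i j l) <= M0).
  { intros n. induction n as [|n IH]; intros Hn l i j Hl Hi Hj.
    - replace l with 0%nat by lia.
      exact (Rabs_le_interior_max Nx Ny (fun i j => v i j 0%nat) i j Hi Hj).
    - destruct (Nat.le_gt_cases l n) as [Hln | Hln]; [apply IH; auto; lia |].
      replace l with (S n) by lia.
      eapply Rle_trans; [apply (Rabs_le_interior_max Nx Ny (fun i j => v i j (S n))); assumption |].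
      apply interior_max_succ_le; auto. apply IH. lia. }
  intros Hk. apply interior_max_le; [exact HM0 |].
  intros i j Hi Hj. exact (Hall k Hk k i j (le_n k) Hi Hj).
Qed.

End HomogeneousStability.

Lemma mesh_peclet A D a c h : 0 < A -> 0 <= a <= A -> D <= c -> 0 <= h -> h <= 2 * D / A ->
  a * h <= 2 * c.
Proof.
  intros HA Ha Hc Hh HhD.
  apply (Rmult_le_compat_l A) in HhD; [| lra].
  replace (A * (2 * D / A)) with (2 * D) in HhD by (field; lra).
  nra.
Qed.

Theorem mainTheorem2
  (alpha T xL xR yL yR A D G : R) (Nx Ny Nt : nat)
  (a b c d f : R -> R -> R -> R) (psi psit : R -> R -> R)
  (v vt : nat -> nat -> nat -> R) :
  0 < alpha < 1 -> 0 < T -> xL < xR -> yL < yR ->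
  (0 < Nx)%nat -> (0 < Ny)%nat -> (0 < Nt)%nat ->
  is_Gamma (2 - alpha) G ->
  0 < A -> 0 < D ->
  (forall x y t, xL <= x <= xR -> yL <= y <= yR -> 0 <= t <= T ->
     0 <= a x y t <= A /\ 0 <= b x y t <= A /\ D <= c x y t /\ D <= d x y t) ->
  Rmax ((xR - xL) / INR Nx) ((yR - yL) / INR Ny) <= 2 * D / A ->
  IFDS alpha G xL xR yL yR T Nx Ny Nt a b c d f psi v ->
  IFDS alpha G xL xR yL yR T Nx Ny Nt a b c d f psit vt ->
  forall k, (1 <= k <= Nt)%nat ->
    interior_max Nx Ny (fun i j => v i j k - vt i j k)
    <= interior_max Nx Ny (fun i j => v i j 0%nat - vt i j 0%nat).
Proof.
  intros Halpha HT Hx Hy HNx HNy HNt HGamma HA HD Hbound Hmesh Hv Hvt k Hk.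
  assert (Hdx : 0 <= (xR - xL) / INR Nx)
    by (left; apply Rdiv_lt_0_compat; [lra | apply lt_0_INR; lia]).
  assert (Hdy : 0 <= (yR - yL) / INR Ny)
    by (left; apply Rdiv_lt_0_compat; [lra | apply lt_0_INR; lia]).
  assert (HdxD := Rle_trans _ _ _ (Rmax_l _ _) Hmesh).
  assert (HdyD := Rle_trans _ _ _ (Rmax_r _ _) Hmesh).
  apply (IFDS_homogeneous_stable alpha G xL xR yL yR T Nx Ny Nt a b c d
           (fun x y => psi x y - psit x y) (fun i j k => v i j k - vt i j k));
    try (assumption || lia).
  - apply (is_Gamma_pos (2 - alpha)); [lra | exact HGamma].
  - intros x y t Hxb Hyb Htb.
    destruct (Hbound x y t Hxb Hyb Htb) as [Ha [Hb [Hc Hd]]].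
    repeat split; try apply (mesh_peclet A D); lra.
  - exact (IFDS_sub _ _ _ _ _ _ _ _ _ _ _ _ _ _ _ _ _ _ _ Hv Hvt).
Qed.
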